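(* Let $\Gamma=(U\cup V,E)$ be a $3$-regular bipartite graph with bipartition $U,V$, and let $M$ be the $n\times n$ matrix described in the context. If $\Gamma$ has an odd number of perfect matchings, then $\det(M)\neq 0$.
   Context: Construction of $\hat\Gamma$: for each vertex $v$ of $\Gamma$ with neighbours $x,y,z$, there are four inner vertices $a_{v,S}$, one for each subset $S\subseteq\{x,y,z\}$ of even size (the set $I_v$), and six outer vertices $b_{v,u,0},b_{v,u,1}$ for $u\in\{x,y,z\}$ (the set $O_v$). Within the gadget, $a_{v,S}$ is adjacent to $b_{v,u,1}$ if $u\in S$ and to $b_{v,u,0}$ if $u\notin S$. For each edge $e=\{u,v\}\in E$ and $i\in\{0,1\}$ there is an edge $e_i$ joining $b_{v,u,i}$ and $b_{u,v,i}$. No other edges. Let $X=\bigcup_{v\in U}I_v\cup\bigcup_{v\in V}O_v$ and $Y=\bigcup_{v\in V}I_v\cup\bigcup_{v\in U}O_v$; all edges of $\hat\Gamma$ join $X$ to $Y$ and $|X|=|Y|=n=10|U|$. Fix arbitrary bijections $\eta:X\to[n]$ and $\eta':Y\to[n]$, and let $M$ be the $n\times n$ $\{0,1\}$-matrix (over a field of characteristic $0$, e.g. the rationals) with $M(\eta(x),\eta'(y))=1$ iff $x$ and $y$ are adjacent in $\hat\Gamma$, and $0$ otherwise. *)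

From HB Require Import structures.
From mathcomp Require Import all_boot all_order all_algebra.
Set Implicit Arguments. Unset Strict Implicit. Unset Printing Implicit Defensive.

(* A bipartite graph Gamma = (U ∪ V, E) is given by two finite types U, V
   (the two sides) and an edge relation e : U -> V -> bool ({u,v} ∈ E iff e u v). *)

Section Gadget.
Variables (U V : finType) (e : U -> V -> bool).

Definition three_regular : Prop :=
  (forall u : U, #|[set v | e u v]| = 3) /\ (forall v : V, #|[set u | e u v]| = 3).

Definition perfect_matching (Mt : {set U * V}) : bool :=
  [forall p in Mt, e p.1 p.2] &&
  [forall u : U, #|[set p in Mt | p.1 == u]| == 1] &&
  [forall v : V, #|[set p in Mt | p.2 == v]| == 1].

Definition perfect_matchings : {set {set U * V}} := [set Mt | perfect_matching Mt].

Definition W : finType := (U + V)%type.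

Definition nbh (w : W) : {set W} :=
  [set w' : W | match w, w' with
                | inl u, inr v => e u v
                | inr v, inl u => e u v
                | _, _ => false
                end].

Definition isU (w : W) : bool := if w is inl _ then true else false.

(* Candidate vertices of hat Gamma:
   inl (v, Sv)      stands for the inner vertex a_{v,S},
   inr (v, u, i)   stands for the outer vertex b_{v,u,i}. *)
Definition Vhat : finType := ((W * {set W}) + (W * W * bool))%type.

Definition valid_inner (v : W) (S : {set W}) : bool :=
  (S \subset nbh v) && ~~ odd #|S|.
Definition valid_outer (v u : W) : bool := u \in nbh v.

(* X = ⋃_{v∈U} I_v ∪ ⋃_{v∈V} O_v ;  Y = ⋃_{v∈V} I_v ∪ ⋃_{v∈U} O_v. *)
Definition inX (x : Vhat) : bool :=
  match x with
  | inl (v, Sv) => isU v && valid_inner v Sv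
  | inr (v, u, _) => ~~ isU v && valid_outer v u
  end.
Definition inY (x : Vhat) : bool :=
  match x with
  | inl (v, Sv) => ~~ isU v && valid_inner v Sv
  | inr (v, u, _) => isU v && valid_outer v u
  end.

Definition Xt : finType := {x : Vhat | inX x}.
Definition Yt : finType := {x : Vhat | inY x}.

(* Adjacency in hat Gamma (between candidate vertices; only used on valid ones):
   a_{v,S} ~ b_{v,u,1} if u ∈ S, a_{v,S} ~ b_{v,u,0} if u ∉ S,
   b_{v,u,i} ~ b_{u,v,i} (edge e_i for e = {u,v}). *)
Definition hadj (x y : Vhat) : bool :=
  match x, y with
  | inl (v, Sv), inr (w, u, i) => (v == w) && (i == (u \in Sv))
  | inr (w, u, i), inl (v, Sv) => (v == w) && (i == (u \in Sv))
  | inr (v, u, i), inr (v', u', i') => (v' == u) && (u' == v) && (i == i')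
  | inl _, inl _ => false
  end.

End Gadget.

From HB Require Import structures.
From mathcomp Require Import all_boot all_order all_algebra.
From mathcomp Require Import fingroup perm.
From mathcomp Require Import ring.
Set Implicit Arguments. Unset Strict Implicit. Unset Printing Implicit Defensive.
Import GRing.Theory.
Local Open Scope ring_scope.

(* Let w be a left-kernel vector of M, read as a function on X.  The equations
   of a vertex a_{v,T} (v in V, T ranging over the four even subsets of N(v))
   force w(b_{v,u,0}) = w(b_{v,u,1}) since 2 is invertible, and the equation
   of b_{u,v,i} (u in U) says that the part of c(u) = sum_S w(a_{u,S}) over
   the S with [v in S] = i is -w(b_{v,u,i}).  Hence c(u) = -2 w(b_{v,u,0}),
   and the T = {} equation makes c a left-kernel vector of the biadjacency
   matrix of Gamma.  The determinant of that matrix is the number of even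
   minus the number of odd permutations along edges; the two add up to the
   (odd) number of perfect matchings, so it is nonzero in characteristic 0,
   and c = 0.  Then every w(b_{v,u,i}) vanishes, and summing the b-equations
   around u against an even S0 gives c(u) + 2 w(a_{u,S0}) = 0, because two
   even subsets of a 3-set agree on exactly one point unless they are equal. *)

Lemma regular_bipartite_card_eq (U V : finType) (e : U -> V -> bool) (k : nat) :
  (0 < k)%N -> (forall u, #|[set v | e u v]| = k) -> (forall v, #|[set u | e u v]| = k) ->
  #|U| = #|V|.
Proof.
move=> k_gt0 degU degV; apply/eqP; rewrite -(eqn_pmul2r k_gt0) -!sum_nat_const; apply/eqP.
rewrite -(eq_bigr _ (fun u _ => degU u)) -(eq_bigr _ (fun v _ => degV v)).
rewrite (eq_bigr _ (fun u _ => esym (sum1dep_card (e u)))).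
under [RHS]eq_bigr do rewrite -sum1dep_card.
by rewrite (exchange_big_dep (mem V)).
Qed.

Lemma pchar0_natr_inj (R : idomainType) :
  [pchar R] =i pred0 -> injective (GRing.natmul (1 : R)).
Proof.
move=> charR0; have natr_eq0 := (pcharf0P R).1 charR0.
suff le_inj m n : (m <= n)%N -> m%:R = n%:R :> R -> m = n.
  by move=> m n; case: (leqP m n) => [/le_inj//|/ltnW/le_inj le_nm /esym/le_nm].
move=> le_mn /eqP; rewrite eq_sym -subr_eq0 -natrB // natr_eq0 subn_eq0 => le_nm.
by apply/eqP; rewrite eqn_leq le_mn.
Qed.

Lemma det_bool_mx (R : comNzRingType) n (P : 'I_n -> 'I_n -> bool) :
  \det (\matrix_(i, j) (P i j)%:R : 'M[R]_n) =
    #|[set s : {perm 'I_n} | [forall i, P i (s i)] & ~~ odd_perm s]|%:R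
  - #|[set s : {perm 'I_n} | [forall i, P i (s i)] & odd_perm s]|%:R.
Proof.
have count_perms (Q : pred {perm 'I_n}) :
    \sum_(s | Q s) ([forall i, P i (s i)] : nat)%:R
    = #|[set s : {perm 'I_n} | [forall i, P i (s i)] & Q s]|%:R :> R.
  rewrite -natr_sum -sum1dep_card big_mkcond [in RHS]big_mkcond /=.
  by congr _%:R; apply: eq_bigr => s _; case: (Q s); case: [forall i, _].
have prod_entries (s : {perm 'I_n}) :
    \prod_i (\matrix_(i, j) (P i j)%:R : 'M[R]_n) i (s i) = ([forall i, P i (s i)] : nat)%:R.
  have [/forallP all_P | /forallPn [i not_P]] := boolP [forall i, P i (s i)].
    by apply: big1 => i _; rewrite mxE all_P.
  by rewrite (bigD1 i) //= mxE (negbTE not_P) mul0r.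
rewrite -!count_perms -sumrN /determinant (bigID (fun s : {perm 'I_n} => odd_perm s)) /= addrC.
congr (_ + _); apply: eq_bigr => s sgn_s.
  by rewrite prod_entries (negbTE sgn_s) mul1r.
by rewrite prod_entries sgn_s mulN1r.
Qed.

Section PerfectMatchings.
Variables (U V : finType) (e : U -> V -> bool).

Lemma perfect_matching_fst_inj Mt p q : perfect_matching e Mt ->
  p \in Mt -> q \in Mt -> p.1 = q.1 -> p = q.
Proof.
case/andP=> /andP [_ /forallP degU] _ pM qM pq.
case/cards1P: (degU p.1) => r Mt_r.
have : p \in [set p0 in Mt | p0.1 == p.1] by rewrite inE pM eqxx.
have : q \in [set p0 in Mt | p0.1 == p.1] by rewrite inE qM pq eqxx.
by rewrite Mt_r !inE => /eqP -> /eqP ->.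
Qed.

Lemma perfect_matching_snd_inj Mt p q : perfect_matching e Mt ->
  p \in Mt -> q \in Mt -> p.2 = q.2 -> p = q.
Proof.
case/andP=> _ /forallP degV pM qM pq.
case/cards1P: (degV p.2) => r Mt_r.
have : p \in [set p0 in Mt | p0.2 == p.2] by rewrite inE pM eqxx.
have : q \in [set p0 in Mt | p0.2 == p.2] by rewrite inE qM pq eqxx.
by rewrite Mt_r !inE => /eqP -> /eqP ->.
Qed.

Lemma perfect_matching_mate Mt u : perfect_matching e Mt -> exists v, (u, v) \in Mt.
Proof.
case/andP=> /andP [_ /forallP degU] _; case/cards1P: (degU u) => p Mt_p.
have : p \in [set p in Mt | p.1 == u] by rewrite Mt_p set11.
by rewrite inE => /andP [pM /eqP <-]; exists p.2; rewrite -surjective_pairing.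
Qed.

Variables (k : nat) (ev : 'I_k -> U) (fv : 'I_k -> V).
Hypotheses (ev_bij : bijective ev) (fv_bij : bijective fv).

Definition perm_matching (s : {perm 'I_k}) : {set U * V} := [set (ev i, fv (s i)) | i : 'I_k].

Lemma perm_matching_inj : injective perm_matching.
Proof.
move=> s t st; apply/permP => i.
have : (ev i, fv (s i)) \in perm_matching t by rewrite -st imset_f.
by case/imsetP => j _ [/(bij_inj ev_bij) <- /(bij_inj fv_bij)].
Qed.

Lemma perm_matching_perfect (s : {perm 'I_k}) : [forall i, e (ev i) (fv (s i))] ->
  perfect_matching e (perm_matching s).
Proof.
move=> /forallP s_edges; case: ev_bij => evI evK evK'; case: fv_bij => fvI fvK fvK'.
rewrite /perfect_matching -andbA; apply/and3P; split.
- by apply/forallP => p; apply/implyP => /imsetP [i _ ->]; apply: s_edges.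
- apply/forallP => u; apply/cards1P; exists (u, fv (s (evI u))).
  apply/setP => p; rewrite !inE; apply/andP/eqP => [[/imsetP [j _ ->] /eqP /= <-]|->].
    by rewrite evK.
  by rewrite eqxx -{1}(evK' u) imset_f.
- apply/forallP => v; apply/cards1P; exists (ev ((s^-1)%g (fvI v)), v).
  apply/setP => p; rewrite !inE; apply/andP/eqP => [[/imsetP [j _ ->] /eqP /= <-]|->].
    by rewrite fvK permK.
  by split=> //; apply/imsetP; exists ((s^-1)%g (fvI v)); rewrite ?permKV ?fvK'.
Qed.

Lemma perfect_matching_perm Mt : perfect_matching e Mt ->
  exists2 s : {perm 'I_k}, [forall i, e (ev i) (fv (s i))] & Mt = perm_matching s.
Proof.
move=> pmMt; case: ev_bij => evI evK evK'; case: fv_bij => fvI fvK fvK'.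
have /fin_all_exists [f f_mate] i : exists j, (ev i, fv j) \in Mt.
  by have [v uvM] := perfect_matching_mate (ev i) pmMt; exists (fvI v); rewrite fvK'.
have f_inj : injective f.
  move=> i j fij; have := perfect_matching_snd_inj pmMt (f_mate i) (f_mate j).
  by rewrite /= fij => /(_ erefl) [/(bij_inj ev_bij)].
exists (perm f_inj).
  apply/forallP => i; rewrite permE.
  by case/andP: pmMt => /andP [/forallP /(_ (ev i, fv (f i))) /implyP /(_ (f_mate i))].
apply/setP => p; apply/idP/imsetP => [pM|[i _ ->]]; last by rewrite permE.
exists (evI p.1) => //; rewrite permE.
by apply: (perfect_matching_fst_inj pmMt) => //=; rewrite evK'.
Qed.

Lemma card_perfect_matchings :
  #|[set s : {perm 'I_k} | [forall i, e (ev i) (fv (s i))]]| = #|perfect_matchings e|.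
Proof.
rewrite -(card_imset _ perm_matching_inj); apply: eq_card => Mt.
rewrite [in RHS]inE; apply/imsetP/idP => [[s]|/perfect_matching_perm [s s_edges ->]].
  by rewrite inE => /perm_matching_perfect pm ->.
by exists s; rewrite ?inE.
Qed.

End PerfectMatchings.

Section Biadjacency.
Variables (U V : finType) (e : U -> V -> bool) (F : fieldType).
Hypotheses (F_char0 : [pchar F] =i pred0) (odd_pm : odd #|perfect_matchings e|).

Lemma det_biadjacency_neq0 k (ev : 'I_k -> U) (fv : 'I_k -> V) :
  bijective ev -> bijective fv ->
  \det (\matrix_(i, j) (e (ev i) (fv j))%:R : 'M[F]_k) != 0.
Proof.
move=> ev_bij fv_bij; rewrite det_bool_mx subr_eq0; apply/eqP => /(pchar0_natr_inj F_char0).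
move: odd_pm; rewrite -(card_perfect_matchings e ev_bij fv_bij).
rewrite -(cardsID [set s : {perm 'I_k} | odd_perm s]) => odd_sum same_count.
suff: odd (#|[set s : {perm 'I_k} | [forall i, e (ev i) (fv (s i))] & ~~ odd_perm s]| * 2).
  by rewrite oddM andbF.
rewrite muln2 -addnn {1}same_count.
by congr (odd (_ + _)) : odd_sum; apply: eq_card => s; rewrite !inE andbC.
Qed.

Lemma biadjacency_left_kernel (c : U -> F) : #|U| = #|V| ->
  (forall v, \sum_(u | e u v) c u = 0) -> forall u, c u = 0.
Proof.
move=> card_UV c_ker.
pose fv (j : 'I_#|U|) : V := enum_val (cast_ord card_UV j).
have ev_bij : bijective (@enum_val U predT).
  by exists enum_rank; [apply: enum_valK | apply: enum_rankK].
have fv_bij : bijective fv.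
  exists (fun v => cast_ord (esym card_UV) (enum_rank v)) => [j|v].
    by rewrite /fv enum_valK cast_ordK.
  by rewrite /fv cast_ordKV enum_rankK.
pose r : 'rV[F]_#|U| := \row_i c (enum_val i).
have r_ker : r *m \matrix_(i, j) (e (enum_val i) (fv j))%:R = 0.
  apply/rowP => j; rewrite !mxE -[RHS](c_ker (fv j)).
  rewrite (reindex enum_val (onW_bij _ ev_bij)) [RHS]big_mkcond /=.
  by apply: eq_bigr => i _; rewrite !mxE; case: (e _ _); rewrite ?mulr1 ?mulr0.
have /eqP r0 : r == 0.
  apply: contraNT (det_biadjacency_neq0 ev_bij fv_bij) => r_neq0.
  by apply/det0P; exists r.
by move=> u; have /rowP/(_ (enum_rank u)) := r0; rewrite !mxE enum_rankK.
Qed.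

End Biadjacency.

Section ThreeSets.
Variable T : finType.

Lemma card3_split (A : {set T}) u : #|A| = 3%N -> u \in A ->
  exists v w, [/\ A = u |: [set v; w], u != v, u != w & v != w].
Proof.
move=> cardA uA.
have : #|A :\ u| == 2%N by move: cardA; rewrite (cardsD1 u) uA add1n => -[->].
case/cards2P => v [w [vw Au]]; exists v, w; rewrite -Au setD1K //.
have : v \in A :\ u by rewrite Au !inE eqxx.
have : w \in A :\ u by rewrite Au !inE eqxx orbT.
by rewrite !inE => /andP [wu _] /andP [vu _]; split; rewrite // eq_sym.
Qed.

Lemma big_set3 (R : Type) (idx : R) (op : Monoid.com_law idx) (u v w : T) (f : T -> R) :
  u != v -> u != w -> v != w ->
  \big[op/idx]_(x in u |: [set v; w]) f x = op (f u) (op (f v) (f w)).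
Proof. by move=> uv uw vw; rewrite big_setU1 ?big_setU1 ?big_set1 // !inE ?negb_or ?uv. Qed.

Lemma card_in_set3 (u v w : T) (P : pred T) : u != v -> u != w -> v != w ->
  #|[set x in u |: [set v; w] | P x]| = (P u + (P v + P w))%N.
Proof.
by move=> uv uw vw; rewrite -sum1dep_card big_mkcondr /= (big_set3 addn).
Qed.

Lemma card_agree_even_subsets3 (A S S' : {set T}) : #|A| = 3%N ->
  S \subset A -> S' \subset A -> ~~ odd #|S| -> ~~ odd #|S'| ->
  #|[set x in A | (x \in S) == (x \in S')]| = (1 + 2 * (S == S'))%N.
Proof.
move=> cardA sSA sS'A.
have [u uA] : exists u, u \in A by apply/set0Pn; rewrite -card_gt0 cardA.
have [v [w [defA uv uw vw]]] := card3_split cardA uA.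
have cardS (S0 : {set T}) :
    S0 \subset A -> #|S0| = ((u \in S0) + ((v \in S0) + (w \in S0)))%N.
  move=> sS0A; rewrite -(card_in_set3 (mem S0)) // -defA.
  by apply: eq_card => x; rewrite [RHS]inE andb_idl // => /(subsetP sS0A).
have -> : (S == S') =
    [&& (u \in S) == (u \in S'), (v \in S) == (v \in S') & (w \in S) == (w \in S')].
  apply/eqP/and3P => [-> | [/eqP agree_u /eqP agree_v /eqP agree_w]]; first by rewrite !eqxx.
  apply/setP => x; have [xA | xNA] := boolP (x \in A).
    by move: xA; rewrite defA !inE => /or3P [] /eqP ->.
  by apply/idP/idP => [/(subsetP sSA) | /(subsetP sS'A)]; rewrite (negbTE xNA).
rewrite defA card_in_set3 // (cardS S) // (cardS S') //.
by case: (u \in S); case: (v \in S); case: (w \in S);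
  case: (u \in S'); case: (v \in S'); case: (w \in S').
Qed.

Lemma even_subsets3_bit_indep (F : fieldType) (A : {set T}) (g : T -> bool -> F) :
  2%:R != 0 :> F -> #|A| = 3%N ->
  (forall S : {set T}, S \subset A -> ~~ odd #|S| -> \sum_(x in A) g x (x \in S) = 0) ->
  {in A, forall u, g u true = g u false}.
Proof.
move=> two_neq0 cardA sum_even u uA.
have [v [w [defA uv uw vw]]] := card3_split cardA uA.
have sum_pair a b : a != b -> a \in A -> b \in A ->
    \sum_(x in A) g x (x \in [set a; b]) = 0.
  move=> ab aA bA; apply: sum_even; last by rewrite cards2 ab.
  by apply/subsetP => x; rewrite !inE => /orP [] /eqP ->.
have vA : v \in A by rewrite defA !inE eqxx orbT.
have wA : w \in A by rewrite defA !inE eqxx !orbT.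
have := sum_even set0 (sub0set A); rewrite cards0 => /(_ isT).
have := sum_pair u v uv uA vA; have := sum_pair u w uw uA wA; have := sum_pair v w vw vA wA.
rewrite defA !(big_set3 +%R) // !inE !eqxx (eq_sym v u) (eq_sym w u) (eq_sym w v).
rewrite (negbTE uv) (negbTE uw) (negbTE vw) /= => Evw Euw Euv E0.
suff : 2%:R * (g u true - g u false) = 0.
  by move/eqP; rewrite mulf_eq0 (negbTE two_neq0) subr_eq0 => /eqP.
transitivity ((g u true + (g v true + g w false)) + (g u true + (g v false + g w true))
  - (g u false + (g v true + g w true)) - (g u false + (g v false + g w false))); first by ring.
by rewrite Euv Euw Evw E0 addr0 !subr0.
Qed.

End ThreeSets.

Lemma sum_nbh_inr (U V : finType) (e : U -> V -> bool) (R : nmodType) v (f : W U V -> R) :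
  \sum_(w in nbh e (inr v)) f w = \sum_(u | e u v) f (inl u).
Proof.
rewrite big_sumType /= [X in _ + X]big_pred0 => [|v']; last by rewrite inE.
by rewrite addr0; apply: eq_bigl => u; rewrite inE.
Qed.

Lemma sum_nbh_inl (U V : finType) (e : U -> V -> bool) (R : nmodType) u (f : W U V -> R) :
  \sum_(w in nbh e (inl u)) f w = \sum_(v | e u v) f (inr v).
Proof.
rewrite big_sumType /= big_pred0 => [|u']; last by rewrite inE.
by rewrite add0r; apply: eq_bigl => v; rewrite inE.
Qed.

Lemma card_nbh3 (U V : finType) (e : U -> V -> bool) :
  three_regular e -> forall w, #|nbh e w| = 3%N.
Proof.
case=> degU degV [u|v].
  rewrite -(degU u) -(card_imset _ (@inr_inj U V)); apply: eq_card => -[a|b]; rewrite !inE /=.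
    by apply/esym/negbTE/imsetP => -[b _].
  by rewrite (mem_imset _ _ (@inr_inj U V)) inE.
rewrite -(degV v) -(card_imset _ (@inl_inj U V)); apply: eq_card => -[a|b]; rewrite !inE /=.
  by rewrite (mem_imset _ _ (@inl_inj U V)) inE.
by apply/esym/negbTE/imsetP => -[b' _].
Qed.

Section GadgetKernel.
Variables (U V : finType) (e : U -> V -> bool) (F : fieldType).

Local Notation inner v S := (inl (v, S) : Vhat U V).
Local Notation outer v u i := (inr (v, u, i) : Vhat U V).

Variable G : Vhat U V -> F.

Definition inner_part (u v : W U V) (i : bool) : F :=
  \sum_(S : {set W U V} | (v \in S) == i) G (inner u S).
Definition inner_total (u : W U V) : F := \sum_(S : {set W U V}) G (inner u S).

Lemma hadj_outer_sum w u i :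
  \sum_(x | hadj x (outer w u i)) G x = inner_part w u i + G (outer u w i).
Proof.
rewrite big_sumType /=; congr (_ + _).
  transitivity (\sum_(a | a == w) \sum_(S : {set W U V} | (u \in S) == i) G (inner a S)).
    rewrite pair_big_dep; apply: eq_big => [[a S]|[a S] _] //=.
    by rewrite eq_sym [i == _]eq_sym.
  by rewrite big_pred1_eq.
apply: big_pred1 => [[[a b] j]] /=.
by rewrite !xpair_eqE (eq_sym w) (eq_sym u) [(a == u) && _]andbC.
Qed.

Lemma hadj_inner_sum v T :
  \sum_(x | hadj x (inner v T)) G x = \sum_u G (outer v u (u \in T)).
Proof.
rewrite big_sumType /= big_pred0 => [|[] //]; rewrite add0r.
rewrite (reindex_onto (fun u => (v, u, u \in T)) (fun x => x.1.2)) => [|[[a b] j] /=]; last first.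
  by case/andP => /eqP <- /eqP ->.
by apply: eq_bigl => u /=; rewrite !eqxx.
Qed.

Hypotheses (F_char0 : [pchar F] =i pred0) (e_reg : three_regular e).
Hypothesis odd_pm : odd #|perfect_matchings e|.
Hypothesis G_supp : forall x, ~~ inX e x -> G x = 0.
Hypothesis G_ker : forall y, inY e y -> \sum_(x | hadj x y) G x = 0.

Let two_neq0 : 2%:R != 0 :> F.
Proof. by rewrite ((pcharf0P F).1 F_char0). Qed.

Let double_eq0 (x : F) : 2%:R * x = 0 -> x = 0.
Proof. by move/eqP; rewrite mulf_eq0 (negbTE two_neq0) => /eqP. Qed.

Lemma inner_partE u v i : e u v ->
  inner_part (inl u) (inr v) i = - G (outer (inr v) (inl u) i).
Proof.
move=> euv; apply/eqP; rewrite -addr_eq0 -hadj_outer_sum; apply/eqP/G_ker.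
by rewrite /= /valid_outer inE.
Qed.

Lemma outer_even_sum v (T : {set W U V}) : T \subset nbh e (inr v) -> ~~ odd #|T| ->
  \sum_(u in nbh e (inr v)) G (outer (inr v) u (u \in T)) = 0.
Proof.
move=> sTN evenT; rewrite -[RHS](G_ker (y := inner (inr v) T)); last first.
  by rewrite /= /valid_inner sTN evenT.
rewrite hadj_inner_sum [RHS](bigID (mem (nbh e (inr v)))) /=.
rewrite [X in _ + X]big1 ?addr0 // => u uN.
by apply: G_supp; rewrite /= /valid_outer.
Qed.

Lemma outer_bit_indep v u : u \in nbh e (inr v) ->
  G (outer (inr v) u true) = G (outer (inr v) u false).
Proof.
move=> uN; exact: (even_subsets3_bit_indep (g := fun u i => G (outer (inr v) u i))
  two_neq0 (card_nbh3 e_reg (inr v)) (@outer_even_sum v) uN).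
Qed.

Lemma inner_total_split u v : inner_total u = inner_part u v true + inner_part u v false.
Proof.
rewrite /inner_total (bigID (fun S : {set W U V} => v \in S)) /=.
by congr (_ + _); apply: eq_bigl => S; case: (v \in S).
Qed.

Lemma inner_total_adj_sum v : \sum_(u | e u v) inner_total (inl u) = 0.
Proof.
have sum0 : \sum_(u | e u v) G (outer (inr v) (inl u) false) = 0.
  rewrite -[RHS](outer_even_sum (sub0set (nbh e (inr v)))) ?cards0 // sum_nbh_inr.
  by apply: eq_bigr => u _; rewrite in_set0.
rewrite (eq_bigr (fun u => - 2%:R * G (outer (inr v) (inl u) false))).
  by rewrite -mulr_sumr sum0 mulr0.
move=> u euv; rewrite (inner_total_split _ (inr v)) !inner_partE // outer_bit_indep ?inE //.
by ring.
Qed.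

Lemma inner_total0 u : inner_total (inl u) = 0.
Proof.
have [degU degV] := e_reg.
apply: (biadjacency_left_kernel (c := fun u => inner_total (inl u)) F_char0 odd_pm).
  exact: (regular_bipartite_card_eq (k := 3) isT degU degV).
exact: inner_total_adj_sum.
Qed.

Lemma inner_part0 u v i : e u v -> inner_part (inl u) (inr v) i = 0.
Proof.
move=> euv.
have part_indep : inner_part (inl u) (inr v) true = inner_part (inl u) (inr v) false.
  by rewrite !inner_partE // outer_bit_indep // inE.
have part_false0 : inner_part (inl u) (inr v) false = 0.
  apply: double_eq0; rewrite -(inner_total0 u) (inner_total_split _ (inr v)) part_indep.
  by ring.
by case: i; rewrite ?part_indep.
Qed.

Lemma outer0 v u i : valid_outer e (inr v) u -> G (outer (inr v) u i) = 0.
Proof.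
case: u => [u|v']; rewrite /valid_outer inE //= => euv.
by apply/eqP; rewrite -oppr_eq0 -inner_partE // inner_part0.
Qed.

Lemma inner_part_agree_sum u S0 : valid_inner e (inl u) S0 ->
  \sum_(v in nbh e (inl u)) inner_part (inl u) v (v \in S0)
  = inner_total (inl u) + 2%:R * G (inner (inl u) S0).
Proof.
case/andP=> sS0N evenS0.
transitivity (\sum_(S : {set W U V})
    G (inner (inl u) S) *+ #|[set v in nbh e (inl u) | (v \in S) == (v \in S0)]|).
  rewrite /inner_part (exchange_big_dep xpredT) //=; apply: eq_bigr => S _.
  by rewrite -sumr_const; apply: eq_bigl => v; rewrite inE.
rewrite (eq_bigr (fun S => G (inner (inl u) S) + G (inner (inl u) S) *+ (2 * (S == S0)))).
  rewrite big_split /= [X in _ + X](bigD1 S0) //= [X in _ + (_ + X)]big1 => [|S nS0]; last first.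
    by rewrite (negbTE nS0) muln0.
  by rewrite eqxx addr0 mulr_natl.
move=> S _; have [/andP [sSN evenS] | not_valid] := boolP (valid_inner e (inl u) S).
  by rewrite card_agree_even_subsets3 ?card_nbh3 // mulrnDr.
by rewrite G_supp ?mul0rn ?addr0.
Qed.

Lemma inner0 u S : valid_inner e (inl u) S -> G (inner (inl u) S) = 0.
Proof.
move=> validS; apply: double_eq0.
have := inner_part_agree_sum validS; rewrite inner_total0 add0r sum_nbh_inl.
by rewrite big1 => [/esym|v euv] //; rewrite inner_part0.
Qed.

Lemma gadget_left_kernel_trivial x : inX e x -> G x = 0.
Proof.
case: x => [[[u|v] S]|[[[u|v] w] i]] //= valid_x; first exact: inner0.
exact: outer0.
Qed.

End GadgetKernel.

Lemma mulmx_hadj_sum (U V : finType) (e : U -> V -> bool) (F : fieldType) n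
    (eta : Xt e -> 'I_n) (eta' : Yt e -> 'I_n) (M : 'M[F]_n) (w : 'rV_n) (G : Vhat U V -> F) :
  bijective eta -> (forall x y, M (eta x) (eta' y) = (hadj (val x) (val y))%:R) ->
  (forall x : Xt e, G (val x) = w 0 (eta x)) -> (forall x, ~~ inX e x -> G x = 0) ->
  forall y : Yt e, (w *m M) 0 (eta' y) = \sum_(x | hadj x (val y)) G x.
Proof.
move=> eta_bij M_adj G_val G_supp y.
rewrite !mxE (reindex eta (onW_bij _ eta_bij)) [RHS]big_mkcond (bigID (inX e)) /=.
rewrite [X in _ = _ + X]big1 => [|x /G_supp ->]; last by case: ifP.
rewrite addr0 (big_sub (inX e)) /=; apply: eq_bigr => x _.
by rewrite G_val M_adj; case: hadj; rewrite ?mulr1 ?mulr0.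
Qed.

Theorem mainTheorem6 (U V : finType) (e : U -> V -> bool)
  (F : fieldType) (hF : [pchar F] =i pred0)
  (eta : Xt e -> 'I_(10 * #|U|)) (eta' : Yt e -> 'I_(10 * #|U|))
  (M : 'M[F]_(10 * #|U|)) :
  three_regular e ->
  bijective eta -> bijective eta' ->
  (forall (x : Xt e) (y : Yt e),
      M (eta x) (eta' y) = (hadj (val x) (val y))%:R) ->
  odd #|perfect_matchings e| ->
  \det M != 0.
Proof.
(* Only the columns eta' y of M are read, so eta' need not be bijective. *)
move=> e_reg eta_bij _ M_adj odd_pm.
apply/det0P => -[w /eqP w_neq0 wM0]; apply: w_neq0.
pose G x := if insub x is Some x' then w 0 (eta x') else 0.
have G_val (x : Xt e) : G (val x) = w 0 (eta x) by rewrite /G valK.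
have G_supp x : ~~ inX e x -> G x = 0 by move=> xNX; rewrite /G insubN.
have G_ker y : inY e y -> \sum_(x | hadj x y) G x = 0.
  move=> yY; rewrite -[y]/(val (Sub y yY : Yt e)).
  by rewrite -(mulmx_hadj_sum eta_bij M_adj G_val G_supp) // wM0 mxE.
apply/rowP => j; have [etaI _ etaIK] := eta_bij.
rewrite -(etaIK j) -G_val mxE.
exact: (gadget_left_kernel_trivial hF e_reg odd_pm G_supp G_ker (valP (etaI j))).
Qed.
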